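(* Let $I=(f_1,\dots,f_n)\subset R=\mathbb{K}[x_1,\dots,x_n]$ be a complete intersection such that for every $d$-dimensional simplicial complex $\Delta$ on vertex set $[n]$, $f_i\in I_\Delta$ for every $i>d+1$. Then $f_1,\dots,f_{d+1}$ is a system of parameters for $I_\Delta$ for every $d$-dimensional simplicial complex $\Delta$ on $[n]$.
   Context: $I_\Delta$ is the Stanley–Reisner ideal of $\Delta$. For a homogeneous ideal $I'$ with $\dim R/I'=d+1$, a system of parameters is a sequence of homogeneous elements $g_1,\dots,g_{d+1}$ such that $R/(I'+(g_1,\dots,g_{d+1}))$ is a finite-dimensional $\mathbb{K}$-vector space. *)

From HB Require Import structures.
From mathcomp Require Import all_boot all_order all_algebra.
From mathcomp Require Import mpoly.
Set Implicit Arguments. Unset Strict Implicit. Unset Printing Implicit Defensive.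
Import GRing.Theory.
Local Open Scope ring_scope.

Section Defs.
Variables (K : fieldType) (n : nat).
Local Notation R := {mpoly K[n]}.

Definition ideal_gen (S : R -> Prop) (p : R) : Prop :=
  exists (m : nat) (r s : 'I_m -> R),
    (forall j, S (s j)) /\ p = \sum_(j < m) r j * s j.

Definition ideal_add (J : R -> Prop) (gs : seq R) : R -> Prop :=
  ideal_gen (fun q => J q \/ q \in gs).

Definition fin_dim_quotient (J : R -> Prop) : Prop :=
  exists (m : nat) (b : 'I_m -> R),
    forall p : R, exists c : 'I_m -> K, J (p - \sum_(j < m) c j *: b j).

Definition homogeneous (p : R) : Prop := exists k : nat, p \is k.-homog.

Definition regular_sequence (m : nat) (f : 'I_m -> R) : Prop :=
  (forall (i : 'I_m) (p : R),
      ideal_gen (fun q => exists j : 'I_m, (j < i)%N /\ q = f j) (p * f i) ->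
      ideal_gen (fun q => exists j : 'I_m, (j < i)%N /\ q = f j) p)
  /\ ~ ideal_gen (fun q => exists j : 'I_m, q = f j) 1.

Definition complete_intersection (f : 'I_n -> R) : Prop :=
  (forall i, homogeneous (f i)) /\ regular_sequence f.

Definition simplicial_complex_dim (Delta : {set {set 'I_n}}) (d : nat) : Prop :=
  [/\ set0 \in Delta,
      (forall F G : {set 'I_n}, F \in Delta -> G \subset F -> G \in Delta),
      (forall i : 'I_n, [set i] \in Delta),
      (exists2 F, F \in Delta & #|F| = d.+1) &
      (forall F, F \in Delta -> (#|F| <= d.+1)%N)].

Definition xmon (F : {set 'I_n}) : R := \prod_(i in F) 'X_i.

Definition SR_ideal (Delta : {set {set 'I_n}}) : R -> Prop :=
  ideal_gen (fun q => exists2 F : {set 'I_n}, F \notin Delta & q = xmon F).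

(* g_1,...,g_k is a system of parameters for I' (in the situation of the
   context, where k = dim R/I'): homogeneous elements such that
   R/(I' + (g_1,...,g_k)) is finite-dimensional over K. *)
Definition system_of_parameters (I' : R -> Prop) (gs : seq R) : Prop :=
  (forall g, g \in gs -> homogeneous g) /\ fin_dim_quotient (ideal_add I' gs).

End Defs.

(* Since f_i lies in I_Delta for i > d+1, the ideal I_Delta + (f_1, ..., f_(d+1))
   contains I = (f_1, ..., f_n), so it suffices that R/I is finite-dimensional.
   Let e_j = deg f_j and J_i = (f_1, ..., f_i). Regularity makes multiplication by
   f_(i+1) injective on R/J_i, so in each degree k
     dim (J_(i+1))_k = dim (J_i)_k + dim R_(k - e_(i+1)) - dim (J_i)_(k - e_(i+1)),
   the same recursion satisfied by the number of degree-k monomials outside the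
   monomial ideal (x_1^e_1, ..., x_i^e_i). Hence both add up to dim R_k, and for i = n
   that count vanishes once k >= e_1 + ... + e_n: I contains every form of such
   degree, and the finitely many monomials of lower degree span R/I. *)

From HB Require Import structures.
From mathcomp Require Import all_boot all_order all_algebra.
From mathcomp Require Import mpoly.
From mathcomp Require Import zify.
Set Implicit Arguments. Unset Strict Implicit. Unset Printing Implicit Defensive.
Import GRing.Theory.
Local Open Scope ring_scope.

Section PolyIdeals.
Variables (K : fieldType) (n : nat).
Local Notation R := {mpoly K[n]}.
Implicit Types (S T : R -> Prop) (p q : R).

Lemma ideal_gen0 S : ideal_gen S 0.
Proof. by exists 0%N, (fun _ => 0), (fun _ => 0); split=> [[]//|]; rewrite big_ord0. Qed.

Lemma ideal_gen_mem S p : S p -> ideal_gen S p.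
Proof. by move=> Sp; exists 1%N, (fun _ => 1), (fun _ => p); rewrite big_ord1 mul1r. Qed.

Lemma ideal_genD S p q : ideal_gen S p -> ideal_gen S q -> ideal_gen S (p + q).
Proof.
move=> [m1 [r1 [s1 [S1 ->]]]] [m2 [r2 [s2 [S2 ->]]]].
exists (m1 + m2)%N, (fun j => match split j with inl a => r1 a | inr b => r2 b end),
  (fun j => match split j with inl a => s1 a | inr b => s2 b end); split.
  by move=> j; case: (split j).
rewrite big_split_ord /=; congr (_ + _); apply: eq_bigr => i _.
  by rewrite (unsplitK (inl i)).
by rewrite (unsplitK (inr i)).
Qed.

Lemma ideal_genMl S a p : ideal_gen S p -> ideal_gen S (a * p).
Proof.
move=> [m [r [s [Ss ->]]]]; exists m, (fun j => a * r j), s; split=> //.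
by rewrite mulr_sumr; apply: eq_bigr => j _; rewrite mulrA.
Qed.

Lemma ideal_genMr S a p : ideal_gen S p -> ideal_gen S (p * a).
Proof. by rewrite mulrC; apply: ideal_genMl. Qed.

Lemma ideal_gen_sum S (I : Type) (r : seq I) (P : pred I) (F : I -> R) :
  (forall i, P i -> ideal_gen S (F i)) -> ideal_gen S (\sum_(i <- r | P i) F i).
Proof.
move=> SF; elim/big_ind: _ => //; [exact: ideal_gen0 | exact: ideal_genD].
Qed.

Lemma ideal_gen_sub S T p :
  (forall q, S q -> ideal_gen T q) -> ideal_gen S p -> ideal_gen T p.
Proof.
move=> ST [m [r [s [Ss ->]]]]; apply: ideal_gen_sum => j _.
by apply: ideal_genMl; apply: ST.
Qed.

Lemma fin_dim_quotient_sub S T :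
  (forall p, S p -> T p) -> fin_dim_quotient S -> fin_dim_quotient T.
Proof. by move=> ST [m [b Sb]]; exists m, b => p; have [c] := Sb p; exists c; apply: ST. Qed.

Lemma pihomogM_dhomog (r g : R) (e k : nat) : g \is e.-homog ->
  pihomog mdeg k (r * g) = if (e <= k)%N then pihomog mdeg (k - e) r * g else 0.
Proof.
move=> hg; rewrite {1 2}(mpolyE r) mulr_suml !linear_sum /=.
have hXg a : 'X_[a] * g \is (mdeg a + e)%N.-homog by rewrite dhomogM ?dhomogX.
case: ifP => ek; last first.
  apply: big1 => a _; rewrite -scalerAl linearZ /= (pihomog_ne0 _ (hXg a)) ?scaler0 //.
  by apply: contraFneq ek => <-; rewrite leq_addl.
rewrite mulr_suml; apply: eq_bigr => a _.
rewrite -!scalerAl !linearZ /= -scalerAl pihomogX; congr (_ *: _).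
case: eqP => [da|nda]; first by rewrite pihomog_dE // -(subnK ek) -da.
rewrite mul0r (pihomog_ne0 _ (hXg a)) //.
by apply: contra_not_neq nda => <-; rewrite addnK.
Qed.

Lemma val_indhomog k p : p \is k.-homog -> val (indhomog k p : dhomog n K k) = p.
Proof. by move=> hp; rewrite /indhomog val_insubd hp. Qed.

Lemma regular_sequence_neq0 r (f : 'I_r -> R) (j : 'I_r) :
  regular_sequence f -> f j != 0.
Proof.
move=> [f_regular not_unit]; apply/eqP => fj0; apply: not_unit.
have := f_regular j 1; rewrite mul1r fj0 => /(_ (ideal_gen0 _)).
by apply: ideal_gen_sub => _ [i [_ ->]]; apply: ideal_gen_mem; exists i.
Qed.

End PolyIdeals.

Section MonomialCount.
Variables (m : nat) (e : 'I_m.+1 -> nat).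
Local Notation n := m.+1.
Implicit Types (a b : 'X_{1..n}) (k : nat).

Definition monomials_of_degree k : seq 'X_{1..n} :=
  [seq s2m t | t : k.-tuple 'I_n <- enum (basis n k)].

Lemma mem_monomials_of_degree k a : (a \in monomials_of_degree k) = (mdeg a == k).
Proof. by rewrite basis_cover. Qed.

Definition below_degrees (i : nat) a : bool :=
  [forall j : 'I_n, (j < i)%N ==> (a j < e j)%N].

Definition count_below i k : nat := count (below_degrees i) (monomials_of_degree k).

Lemma below_degreesS (i : 'I_n) a :
  below_degrees i.+1 a = below_degrees i a && (a i < e i)%N.
Proof.
apply/forallP/andP => [below | [/forallP below lt_ai] j]; last first.
  by rewrite ltnS leq_eqVlt; case: eqP => [/val_inj -> //| _]; apply: below.
split; last by have := below i; rewrite ltnSn.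
by apply/forallP => j; apply/implyP => ji; apply: (implyP (below j)); apply: ltnW.
Qed.

Lemma below_degrees_shift (i : 'I_n) t a :
  below_degrees i (a + U_(i) *+ t)%MM = below_degrees i a.
Proof.
apply: eq_forallb => j; case: (ltnP j i) => //= ji.
by rewrite mnmDE mulmnE mnm1E; case: eqP ji => [->|]; rewrite ?ltnn // mul0n addn0.
Qed.

Lemma mdeg_shift (i : 'I_n) t a : mdeg (a + U_(i) *+ t)%MM = (mdeg a + t)%N.
Proof. by rewrite mdegD mdegMn mdeg1 mul1n. Qed.

Lemma count_below0 k : count_below 0 k = 'C(k + m, k).
Proof.
rewrite /count_below (eq_count (a2 := predT)) ?count_predT ?size_basis //.
by move=> a; apply/forallP.
Qed.

Lemma count_belowS_small (i : 'I_n) k : (k < e i)%N -> count_below i.+1 k = count_below i k.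
Proof.
move=> lt_ke; apply: eq_in_count => a; rewrite mem_monomials_of_degree => /eqP da.
rewrite below_degreesS (leq_ltn_trans _ lt_ke) ?andbT // -da mdegE.
by rewrite (bigD1 i) //= leq_addr.
Qed.

Lemma filter_monomials_ge (i : 'I_n) k : (e i <= k)%N ->
  perm_eq [seq a : 'X_{1..n} <- monomials_of_degree k | (e i <= a i)%N]
          [seq (b + U_(i) *+ e i)%MM | b <- monomials_of_degree (k - e i)].
Proof.
move=> le_ek; apply: uniq_perm; first by rewrite filter_uniq ?uniq_basis.
  by rewrite map_inj_uniq ?uniq_basis //; apply: addIm.
move=> a; rewrite mem_filter mem_monomials_of_degree.
apply/andP/mapP => [[le_ea /eqP da] | [b]].
  have le_Ua : (U_(i) *+ e i <= a)%MM.
    by apply/mnm_lepP => j; rewrite mulmnE mnm1E; case: eqP => [<-|]; rewrite ?mul1n.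
  exists (a - U_(i) *+ e i)%MM; last by rewrite submK.
  by rewrite mem_monomials_of_degree -(eqn_add2r (e i)) -(mdeg_shift i) submK ?da ?subnK.
rewrite mem_monomials_of_degree => /eqP db ->.
by rewrite mdeg_shift db subnK // mnmDE mulmnE mnm1E eqxx mul1n leq_addl.
Qed.

Lemma count_belowS (i : 'I_n) k :
  (e i <= k)%N -> count_below i k = (count_below i.+1 k + count_below i (k - e i))%N.
Proof.
move=> le_ek; set P := fun a : 'X_{1..n} => (a i < e i)%N.
rewrite /count_below -size_filter -(count_predC P); congr (_ + _)%N.
  by rewrite count_filter; apply: eq_count => a; rewrite /= below_degreesS andbC.
transitivity (count (below_degrees i)
                [seq a : 'X_{1..n} <- monomials_of_degree k | (e i <= a i)%N]).
  by rewrite !count_filter; apply: eq_count => a; rewrite /= -leqNgt andbC.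
rewrite (permP (filter_monomials_ge le_ek)) count_map.
by apply: eq_count => b; rewrite /= below_degrees_shift.
Qed.

Lemma count_below_ge_sum k : (\sum_(j < n) e j <= k)%N -> count_below n k = 0%N.
Proof.
move=> le_Ek; apply/eqP; rewrite -leqn0 leqNgt -has_count; apply/hasPn => a.
rewrite mem_monomials_of_degree => /eqP da; apply/forallP => below.
have : (\sum_(j < n) (a j).+1 <= \sum_(j < n) e j)%N.
  by apply: leq_sum => j _; apply: (implyP (below j)).
under eq_bigr do rewrite -addn1.
rewrite big_split /= sum1_card card_ord -mdegE da => /leq_trans/(_ le_Ek).
by rewrite addnS ltnNge leq_addr.
Qed.

End MonomialCount.

Section HilbertFunction.
Variables (K : fieldType) (m : nat).
Local Notation n := m.+1.
Local Notation R := {mpoly K[n]}.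
Local Notation V k := (dhomog n K k).
Variables (f : 'I_n -> R) (e : 'I_n -> nat).
Hypothesis f_homog : forall j, f j \is (e j).-homog.
Hypothesis f_neq0 : forall j, f j != 0.

Definition prefix_ideal (i : nat) : R -> Prop :=
  ideal_gen (fun q => exists j : 'I_n, (j < i)%N /\ q = f j).

Hypothesis f_regular : forall (i : 'I_n) p, prefix_ideal i (p * f i) -> prefix_ideal i p.

Lemma prefix_ideal_f i (j : 'I_n) : (j < i)%N -> prefix_ideal i (f j).
Proof. by move=> ji; apply: ideal_gen_mem; exists j. Qed.

(* When k < e_j the source degree k - e_j truncates to 0 and the projection onto
   degree k makes the map zero. *)
Definition mulf j k (p : V (k - e j)) : V k := indhomog k (pihomog mdeg k (val p * f j)).

Lemma val_mulf j k p : val (@mulf j k p) = pihomog mdeg k (val p * f j).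
Proof. by rewrite val_indhomog // pihomogP. Qed.

Lemma mulfE j k p : (e j <= k)%N -> val (@mulf j k p) = val p * f j.
Proof.
move=> le_ek; rewrite val_mulf (pihomogM_dhomog _ _ (f_homog j)) le_ek pihomog_dE //.
exact: dhomog_is_dhomog.
Qed.

Lemma mulf_is_linear j k : linear (@mulf j k).
Proof.
by move=> c p q; apply: val_inj; rewrite /= !val_mulf /= mulrDl -scalerAl linearP.
Qed.

HB.instance Definition _ j k :=
  GRing.isLinear.Build K (V (k - e j)) (V k) _ (@mulf j k) (@mulf_is_linear j k).

Definition mulf_hom j k : 'Hom(V (k - e j), V k) := linfun (@mulf j k).

Lemma mulf_homE j k p : mulf_hom j k p = mulf p.
Proof. exact: lfunE. Qed.

Definition prefix_component (i k : nat) : {vspace V k} :=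
  (\sum_(j < n | (j < i)%N && (e j <= k)%N) (mulf_hom j k @: fullv))%VS.

Lemma prefix_componentP i k (p : V k) :
  reflect (prefix_ideal i (val p)) (p \in prefix_component i k).
Proof.
apply: (iffP idP) => [/memv_sumP [vs vsP ->] | [M [r [s [sP pE]]]]].
  rewrite raddf_sum /=; apply: ideal_gen_sum => j /andP[ji le_ek].
  have /memv_imgP [q _ ->] := vsP j (introT andP (conj ji le_ek)).
  by rewrite mulf_homE mulfE //; apply: ideal_genMl; apply: prefix_ideal_f.
have -> : p = \sum_(l < M) (indhomog k (pihomog mdeg k (r l * s l)) : V k).
  apply: val_inj; rewrite raddf_sum /= -(pihomog_dE (dhomog_is_dhomog p)) pE linear_sum.
  by apply: eq_bigr => l _; rewrite val_indhomog // pihomogP.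
apply: memv_suml => l _; have [j [ji ->]] := sP l.
rewrite (pihomogM_dhomog _ _ (f_homog j)); case: ifP => le_ek; last first.
  by rewrite (_ : indhomog k 0 = 0) ?mem0v //; apply: val_inj; rewrite val_indhomog ?dhomog0.
have -> : (indhomog k (pihomog mdeg (k - e j) (r l) * f j) : V k) =
    mulf_hom j k (indhomog (k - e j) (pihomog mdeg (k - e j) (r l))).
  apply: val_inj; rewrite mulf_homE mulfE // !val_indhomog ?pihomogP //.
  by have := dhomogM (pihomogP mdeg (k - e j) (r l)) (f_homog j); rewrite subnK.
apply: (subvP (sumv_sup j _ (subvv _))); first by rewrite ji le_ek.
exact: memv_img (memvf _).
Qed.

Lemma mulf_hom_inj (i : 'I_n) k : (e i <= k)%N -> lker (mulf_hom i k) == 0%VS.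
Proof.
move=> le_ek; apply/lker0P => p q; rewrite !mulf_homE => /(congr1 val).
by rewrite !mulfE // => /(mulIf (f_neq0 i)) /val_inj.
Qed.

Lemma prefix_componentS (i : 'I_n) k : (e i <= k)%N ->
  prefix_component i.+1 k = (prefix_component i k + mulf_hom i k @: fullv)%VS.
Proof.
move=> le_ek; rewrite /prefix_component (bigD1 i) /= ?ltnSn ?le_ek // addvC.
congr (_ + _)%VS; apply: eq_bigl => j; rewrite ltnS leq_eqVlt -val_eqE /=.
by case: eqP => [-> | _]; rewrite ?ltnn ?andbF ?andbT.
Qed.

Lemma prefix_componentS_small (i : 'I_n) k :
  (k < e i)%N -> prefix_component i.+1 k = prefix_component i k.
Proof.
move=> lt_ke; apply: eq_bigl => j; rewrite ltnS leq_eqVlt.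
by case: eqP => [/val_inj -> | _]; rewrite ?ltnn // leqNgt lt_ke andbF.
Qed.

(* This is where regularity of f_i modulo f_0, ..., f_(i-1) enters. *)
Lemma prefix_component_capv_img (i : 'I_n) k : (e i <= k)%N ->
  (prefix_component i k :&: mulf_hom i k @: fullv)%VS
  = (mulf_hom i k @: prefix_component i (k - e i))%VS.
Proof.
move=> le_ek; apply/vspaceP => v; apply/memv_capP/memv_imgP.
  move=> [/prefix_componentP vJ /memv_imgP [q _ vq]]; exists q => //.
  by apply/prefix_componentP/f_regular; rewrite -mulfE // -mulf_homE -vq.
move=> [q /prefix_componentP qJ ->]; split; last exact: memv_img (memvf q).
by apply/prefix_componentP; rewrite mulf_homE mulfE //; apply: ideal_genMr.
Qed.

Lemma dim_prefix_componentS (i : 'I_n) k : (e i <= k)%N ->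
  (\dim (prefix_component i.+1 k) + \dim (prefix_component i (k - e i)) =
   \dim (prefix_component i k) + \dim (fullv : {vspace V (k - e i)}))%N.
Proof.
move=> le_ek; have /eqP inj := mulf_hom_inj le_ek.
have dim_img (U : {vspace V (k - e i)}) : \dim (mulf_hom i k @: U) = \dim U.
  by apply: limg_dim_eq; rewrite inj capv0.
by rewrite prefix_componentS // -!dim_img -prefix_component_capv_img // dimv_sum_cap.
Qed.

Lemma dim_prefix_component i k : (i <= n)%N ->
  (\dim (prefix_component i k) + count_below e i k = 'C(k + m, k))%N.
Proof.
elim: i k => [|i IH] k lt_in.
  by rewrite count_below0 /prefix_component big_pred0 ?dimv0.
pose io : 'I_n := Ordinal lt_in; rewrite -[i]/(nat_of_ord io).
have [le_ek | lt_ke] := leqP (e io) k; last first.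
  by rewrite prefix_componentS_small // count_belowS_small //; apply: IH (ltnW lt_in).
have := dim_prefix_componentS le_ek; rewrite dimvf /dim /=.
have := count_belowS le_ek; have := IH k (ltnW lt_in).
have := IH (k - e io)%N (ltnW lt_in); rewrite /=; lia.
Qed.

Lemma prefix_component_full k :
  (\sum_(j < n) e j <= k)%N -> prefix_component n k = fullv.
Proof.
move=> le_Ek; apply/eqP; rewrite eqEdim subvf dimvf /dim /=.
by rewrite -(dim_prefix_component k (leqnn n)) count_below_ge_sum ?addn0.
Qed.

Lemma dhomog_prefix_ideal k p :
  (\sum_(j < n) e j <= k)%N -> p \is k.-homog -> prefix_ideal n p.
Proof.
move=> le_Ek hp; rewrite -(val_indhomog hp); apply/prefix_componentP.
by rewrite prefix_component_full ?memvf.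
Qed.

Lemma fin_dim_quotient_prefix_ideal : fin_dim_quotient (prefix_ideal n).
Proof.
pose E := (\sum_(j < n) e j)%N.
exists #|{: 'X_{1..n < E}}|, (fun j => 'X_[bmnm (enum_val j)]) => p.
exists (fun j => p@_(bmnm (enum_val j))); set q := p - _.
rewrite (pihomog_partitionE (leqnn (mmeasure mdeg q))).
apply: ideal_gen_sum => t _; have [le_Et | lt_tE] := leqP E t.
  exact: dhomog_prefix_ideal le_Et (pihomogP _ _ _).
rewrite pihomogE big1 => [|a /eqP da]; first exact: ideal_gen0.
have aE : (mdeg a < E)%N by rewrite da.
rewrite /q mcoeffB raddf_sum /=.
rewrite -(big_enum_val (A := xpredT) (fun b : 'X_{1..n < E} => (p@_b *: 'X_[b])@_a)).
rewrite (bigD1 (BMultinom aE)) //= big1 => [|b ne_ba]; last first.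
  rewrite mcoeffZ mcoeffX; case: eqP => [ba|]; last by rewrite mulr0.
  by case/eqP: ne_ba; apply: val_inj.
by rewrite mcoeffZ mcoeffX eqxx mulr1 addr0 subrr scale0r.
Qed.

End HilbertFunction.

Lemma complete_intersection_fin_dim (K : fieldType) (n : nat) (f : 'I_n -> {mpoly K[n]}) :
  complete_intersection f -> fin_dim_quotient (ideal_gen (fun q => exists j, q = f j)).
Proof.
case: n f => [|m] f [f_homog f_reg].
  exists 1%N, (fun _ => 1) => p; exists (fun _ => p@_0%MM).
  rewrite big_ord1 {1}(nvar0_mpolyC_eq p) // -mul_mpolyC mulr1 subrr; apply: ideal_gen0.
have deg_f j : f j \is (xchoose (f_homog j)).-homog := xchooseP (f_homog j).
have f_neq0 j : f j != 0 := regular_sequence_neq0 j f_reg.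
apply: fin_dim_quotient_sub (fin_dim_quotient_prefix_ideal deg_f f_neq0 f_reg.1) => p.
by apply: ideal_gen_sub => _ [j [_ ->]]; apply: ideal_gen_mem; exists j.
Qed.

Unset Implicit Arguments.
Theorem lemma3p6 (K : fieldType) (n d : nat) (f : 'I_n -> {mpoly K[n]}) :
  complete_intersection f ->
  (forall Delta : {set {set 'I_n}}, simplicial_complex_dim Delta d ->
     forall i : 'I_n, (d.+1 <= i)%N -> SR_ideal Delta (f i)) ->
  forall Delta : {set {set 'I_n}}, simplicial_complex_dim Delta d ->
    system_of_parameters (SR_ideal Delta)
      (map f (filter (fun j : 'I_n => (j < d.+1)%N) (enum 'I_n))).
Proof.
move=> ci f_SR Delta Delta_dim; split=> [g /mapP [j _ ->] | ]; first exact: ci.1.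
apply: fin_dim_quotient_sub (complete_intersection_fin_dim ci) => p.
apply: ideal_gen_sub => _ [j ->]; apply: ideal_gen_mem.
have [lt_jd | le_dj] := ltnP j d.+1; last by left; apply: f_SR.
by right; rewrite map_f // mem_filter lt_jd mem_enum.
Qed.
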